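(* For $1\leq d<m$, let $U_m^d$ denote the uniform matroid of rank $d$ on $m$ elements, let $F_m^d(z)=\sum_{i=0}^{d}\binom{m}{i}z^i$ be its rank-generating function, and let $H_m^d(q):=(1-q)^{d}F_m^d\left(\frac{q}{1-q}\right)$. If $q\in\mathbb{C}$ satisfies $H_m^d(q)=0$, then $(m-d)^{-1}\leq |q|\leq d(m-1)^{-1}$. In particular, $H_m^d(q)$ is Schur quasi-stable (all its complex zeros satisfy $|q|\leq 1$), i.e. $U_m^d$ belongs to the class of set systems whose $H$-polynomial is Schur quasi-stable.
   Context: For a set system $\Omega$ of degree $d$ (maximum face size) with $f_i$ faces of size $i$, the rank-generating function is $F_\Omega(z)=\sum_{i=0}^d f_i z^i$, and the $H$-polynomial is $H_\Omega(q):=(1-q)^{d}F_\Omega\left(\frac{q}{1-q}\right)$. A polynomial is Schur quasi-stable if all its complex zeros satisfy $|q|\leq 1$. *)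

From HB Require Import structures.
From mathcomp Require Import all_boot all_order all_algebra.
From mathcomp Require Import complex.
From mathcomp Require Import reals.
Set Implicit Arguments. Unset Strict Implicit. Unset Printing Implicit Defensive.
Import Order.TTheory GRing.Theory Num.Theory.
Local Open Scope ring_scope.

Definition unif_rank_gen (K : comNzRingType) (m d : nat) : {poly K} :=
  \sum_(i < d.+1) ('C(m, i))%:R *: 'X^i.

(* H-polynomial of a rank-generating function F of degree <= d:
   H(q) = (1-q)^d F(q/(1-q)) = sum_{i=0}^d f_i q^i (1-q)^(d-i). *)
Definition H_poly (K : comNzRingType) (d : nat) (F : {poly K}) : {poly K} :=
  \sum_(i < d.+1) F`_i *: ('X^i * (1 - 'X) ^+ (d - i)).

Definition schur_quasi_stable (R : realType) (p : {poly R[i]}) : Prop :=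
  forall q : R[i], root p q -> `|q| <= 1.

From HB Require Import structures.
From mathcomp Require Import all_boot all_order all_algebra.
From mathcomp Require Import complex.
From mathcomp Require Import reals.
From mathcomp Require Import zify.
Import Order.TTheory GRing.Theory Num.Theory.
Set Implicit Arguments. Unset Strict Implicit. Unset Printing Implicit Defensive.
Local Open Scope ring_scope.

(* Write m = k + d + 1. The identity
   sum_(i <= d) C(m, i) q^i (1 - q)^(d - i) = sum_(j <= d) C(k + j, j) q^j
   identifies H_m^d with the degree-d truncation of (1 - q)^-(k + 1). Its
   coefficients a_j = C(k + j, j) are positive and the ratios
   a_j / a_(j+1) = (j + 1) / (k + j + 1) increase from 1 / (k + 1) to d / (k + d),
   so the Enestrom-Kakeya theorem puts every zero in the annulus
   1 / (m - d) <= |q| <= d / (m - 1). *)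

Section NegBinomialTruncation.
Variables (K : comNzRingType) (z : K).

Definition neg_binom_trunc (k d : nat) : K :=
  \sum_(j < d.+1) 'C(k + j, j)%:R * z ^+ j.

Lemma neg_binom_trunc_pascal k d :
  neg_binom_trunc k d.+1 = neg_binom_trunc k.+1 d.+1 - z * neg_binom_trunc k.+1 d.
Proof.
apply/eqP; rewrite eq_sym subr_eq /neg_binom_trunc.
rewrite big_ord_recl [in X in _ == X + _]big_ord_recl /= !addn0 !bin0 -addrA.
rewrite mulr_sumr -big_split /=; apply/eqP; congr (_ + _); apply: eq_bigr => i _.
by rewrite /bump /= add1n !addSn !addnS binS natrD mulrDl exprS (mulrCA z).
Qed.

Lemma neg_binom_truncS k d :
  neg_binom_trunc k d.+1
  = (1 - z) * neg_binom_trunc k.+1 d + 'C(k.+1 + d.+1, d.+1)%:R * z ^+ d.+1.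
Proof.
by rewrite neg_binom_trunc_pascal {1}/neg_binom_trunc big_ord_recr mulrBl mul1r addrAC.
Qed.

Lemma sum_binom_1subr_neg_binom_trunc k d :
  \sum_(i < d.+1) 'C(k + d.+1, i)%:R * z ^+ i * (1 - z) ^+ (d - i)
  = neg_binom_trunc k d.
Proof.
elim: d k => [|d IHd] k.
  by rewrite /neg_binom_trunc !big_ord1 /= !bin0 !expr0 !mulr1.
rewrite neg_binom_truncS -IHd big_ord_recr /= subnn expr0 mulr1 -addSnnS.
congr (_ + _); rewrite mulr_sumr; apply: eq_bigr => i _.
have i_le_d : (i <= d)%N by rewrite -ltnS.
by rewrite (subSn i_le_d) exprSr [RHS]mulrC !mulrA.
Qed.

End NegBinomialTruncation.

Lemma H_poly_unif_rank_gen (K : comNzRingType) (k d : nat) :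
  H_poly d (unif_rank_gen K (k + d.+1) d) = \poly_(j < d.+1) 'C(k + j, j)%:R.
Proof.
have -> : unif_rank_gen K (k + d.+1) d = \poly_(i < d.+1) 'C(k + d.+1, i)%:R.
  by rewrite poly_def.
rewrite /H_poly [RHS]poly_def.
transitivity (\sum_(i < d.+1) 'C(k + d.+1, i)%:R * 'X^i * (1 - 'X) ^+ (d - i) : {poly K}).
  by apply: eq_bigr => i _; rewrite coef_poly ltn_ord /= scalerAl scaler_nat mulr_natl.
rewrite sum_binom_1subr_neg_binom_trunc; apply: eq_bigr => j _.
by rewrite scaler_nat mulr_natl.
Qed.

Lemma horner_norm_ge0 (C : numDomainType) (q : {poly C}) (j : nat) (z : C) :
  q`_j <= 0 -> (forall i : nat, i != j -> 0 <= q`_i) -> root q z -> 0 <= q.[`|z|].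
Proof.
move=> qj_le0 q_ge0 /rootP.
have size_q : (size q <= maxn (size q) j.+1)%N by apply: leq_maxl.
have j_lt_n : (j < maxn (size q) j.+1)%N by apply: leq_maxr.
rewrite !(horner_coef_wide _ size_q) => /eqP.
rewrite (bigD1 (Ordinal j_lt_n)) //= addr_eq0 => /eqP qjz.
rewrite (bigD1 (Ordinal j_lt_n)) //=.
have norm_qj_le : `|q`_j * z ^+ j| <= \sum_(i < _ | i != Ordinal j_lt_n) q`_i * `|z| ^+ i.
  rewrite qjz normrN; apply: le_trans (ler_norm_sum _ _ _) _.
  apply: ler_sum => i ij; rewrite normrM normrX ger0_norm //; exact: q_ge0.
rewrite addrC -[_ * `|z| ^+ j]opprK subr_ge0.
by rewrite normrM normrX ler0_norm // mulNr in norm_qj_le.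
Qed.

(* Multiplying p by rho - X (resp. X - sg) leaves a single negative coefficient,
   so by [horner_norm_ge0] a root z gives 0 <= (rho - |z|) p.[|z|] with
   p.[|z|] > 0. *)
Section EnestromKakeya.
Variables (C : numDomainType) (p : {poly C}).
Hypotheses (p_ge0 : forall i, 0 <= p`_i) (p0_gt0 : 0 < p`_0).

Lemma horner_gt0 (x : C) : 0 <= x -> 0 < p.[x].
Proof.
move=> x_ge0; rewrite (horner_coef_wide _ (leqnSn (size p))) big_ord_recl.
rewrite expr0 mulr1 ltr_wpDr //; apply: sumr_ge0 => i _.
by rewrite mulr_ge0 ?exprn_ge0.
Qed.

Lemma enestrom_kakeya_ub (n : nat) (rho z : C) :
  0 < rho -> (size p <= n.+1)%N -> (forall i, (i < n)%N -> p`_i <= rho * p`_i.+1) ->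
  root p z -> `|z| <= rho.
Proof.
move=> rho_gt0 size_p p_ratio pz0; set q := (rho%:P - 'X) * p.
have coef_q i : q`_i = rho * p`_i - (if i is i'.+1 then p`_i' else 0).
  by rewrite /q mulrBl coefB coefXM mul_polyC coefZ; case: i.
have : 0 <= q.[`|z|].
  apply: (@horner_norm_ge0 _ _ n.+1).
  - by rewrite coef_q (nth_default 0 size_p) mulr0 sub0r oppr_le0.
  - case=> [|i] i_neq; first by rewrite coef_q subr0 mulr_ge0 // ltW.
    rewrite coef_q subr_ge0; have [/p_ratio //|n_le_i] := ltnP i n.
    have size_le_i : (size p <= i)%N.
      by apply: leq_trans size_p _; rewrite ltn_neqAle eq_sym -eqSS i_neq.
    by rewrite !(nth_default 0 size_le_i, nth_default 0 (leqW size_le_i)) mulr0.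
  - by rewrite /q rootM pz0 orbT.
rewrite /q hornerM pmulr_lge0 ?horner_gt0 //.
by rewrite hornerD hornerN hornerC hornerX subr_ge0.
Qed.

Lemma enestrom_kakeya_lb (sg z : C) :
  0 < sg -> (forall i, sg * p`_i.+1 <= p`_i) -> root p z -> sg <= `|z|.
Proof.
move=> sg_gt0 p_ratio pz0; set q := ('X - sg%:P) * p.
have coef_q i : q`_i = (if i is i'.+1 then p`_i' else 0) - sg * p`_i.
  by rewrite /q mulrBl coefB coefXM mul_polyC coefZ; case: i.
have : 0 <= q.[`|z|].
  apply: (@horner_norm_ge0 _ _ 0).
  - by rewrite coef_q sub0r oppr_le0 mulr_ge0 // ltW.
  - by case=> [|i] // _; rewrite coef_q subr_ge0.
  - by rewrite /q rootM pz0 orbT.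
rewrite /q hornerM pmulr_lge0 ?horner_gt0 //.
by rewrite hornerD hornerN hornerC hornerX subr_ge0.
Qed.

End EnestromKakeya.

Lemma bin_addnS_leq (k i : nat) : ('C(k + i.+1, i.+1) <= k.+1 * 'C(k + i, i))%N.
Proof.
have := mul_bin_diag (k + i).+1 i; rewrite /= -addnS => bin_diag.
by rewrite -(leq_pmul2l (ltn0Sn i)) -bin_diag mulnA leq_mul //; nia.
Qed.

Lemma leq_bin_addnS (k i d : nat) : (i < d)%N ->
  ((k + d) * 'C(k + i, i) <= d * 'C(k + i.+1, i.+1))%N.
Proof.
move=> i_lt_d; have := mul_bin_diag (k + i).+1 i; rewrite /= -addnS => bin_diag.
rewrite -(leq_pmul2l (ltn0Sn i)) [X in (_ <= X)%N]mulnCA -bin_diag !mulnA.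
by rewrite leq_mul //; nia.
Qed.

Lemma neg_binom_poly_root_bounds (C : numFieldType) (k d : nat) (z : C) :
  (0 < d)%N -> root (\poly_(j < d.+1) 'C(k + j, j)%:R) z ->
  (k.+1%:R)^-1 <= `|z| <= d%:R / (k + d)%:R.
Proof.
move=> d_gt0 pz0; set p := \poly_(j < d.+1) _ in pz0.
have coef_p i : p`_i = if (i <= d)%N then 'C(k + i, i)%:R else 0 by rewrite coef_poly.
have p_ge0 i : 0 <= p`_i by rewrite coef_p; case: ifP.
have p0_gt0 : 0 < p`_0 by rewrite coef_p addn0 bin0 ltr01.
apply/andP; split.
- apply: (enestrom_kakeya_lb p_ge0 p0_gt0 _ _ pz0) => [|i]; first by rewrite invr_gt0 ltr0Sn.
  have [i_lt_d | d_le_i] := ltnP i d; last by rewrite [p`_i.+1]coef_p ltnNge d_le_i mulr0.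
  rewrite !coef_p i_lt_d (ltnW i_lt_d) mulrC ler_pdivrMr ?ltr0Sn //.
  by rewrite -natrM ler_nat mulnC bin_addnS_leq.
- have kd_gt0 : 0 < (k + d)%:R :> C by rewrite ltr0n addn_gt0 d_gt0 orbT.
  apply: (enestrom_kakeya_ub p_ge0 p0_gt0 _ (size_poly _ _) _ pz0) => [|i i_lt_d].
    by rewrite divr_gt0 // ltr0n.
  rewrite !coef_p i_lt_d (ltnW i_lt_d) mulrAC ler_pdivlMr //.
  by rewrite -!natrM ler_nat mulnC leq_bin_addnS.
Qed.

Theorem proposition6p3 (R : realType) (m d : nat) :
  (1 <= d)%N -> (d < m)%N ->
  (forall q : R[i], root (H_poly d (unif_rank_gen R[i] m d)) q ->
     ((m - d)%:R)^-1 <= `|q| <= d%:R / (m - 1)%:R)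
  /\ schur_quasi_stable (H_poly d (unif_rank_gen R[i] m d)).
Proof.
move=> d_gt0 d_lt_m.
have [k ->] : exists k, m = (k + d.+1)%N by exists (m - d.+1)%N; rewrite subnK.
have -> : (k + d.+1 - d = k.+1)%N by lia.
have -> : (k + d.+1 - 1 = k + d)%N by lia.
rewrite H_poly_unif_rank_gen.
split=> [q|q /(neg_binom_poly_root_bounds d_gt0) /andP[_ q_le]].
  exact: neg_binom_poly_root_bounds.
apply: le_trans q_le _; rewrite ler_pdivrMr ?mul1r ?ler_nat ?ltr0n; lia.
Qed.
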